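(* Let $c_0,c_1>0$ be sufficiently large numerical constants, let $K\ge2$ be a fixed integer, and define $\beta_1=T^{-c_0}$, $\beta_t=\frac{c_1\log T}{T}\min\{\beta_1(1+\frac{c_1\log T}{T})^t,1\}$ for $2\le t\le T$, $\alpha_t=1-\beta_t$, $\overline\alpha_t=\prod_{i=1}^t\alpha_i$. For $2\le t\le T$ let $\tau_{t,0}=1-\overline\alpha_t$, $\tau_{t,K-1}=1-\overline\alpha_{t-1}$, $\tau_{t,i}=\tau_{t,0}-\frac{i}{K-1}(\tau_{t,0}-\tau_{t,K-1})$ for $0\le i\le K-1$, let $\psi_i(\tau)=\prod_{i'\ne i}(\tau-\tau_{t,i'})/\prod_{i'\ne i}(\tau_{t,i}-\tau_{t,i'})$ (products over $0\le i'\le K-1$, $i'\ne i$) and $\gamma_{t,i}(\tau')=\int_{\tau'}^{\tau_{t,0}}\psi_i(\tau)d\tau$. Then for $T$ large enough: (a) $\alpha_t\ge 1-\frac{c_1\log T}{T}\ge\frac12$ for $1\le t\le T$; (b) $\frac12\frac{1-\alpha_t}{1-\overline\alpha_t}\le\frac12\frac{1-\alpha_t}{\alpha_t-\overline\alpha_t}\le\frac{1-\alpha_t}{1-\overline\alpha_{t-1}}\le\frac{4c_1\log T}{T}$ for $2\le t\le T$; (c) $1\le\frac{1-\overline\alpha_t}{1-\overline\alpha_{t-1}}\le1+\frac{4c_1\log T}{T}$ for $2\le t\le T$; (d) $\overline\alpha_T\le T^{-c_2}$ for a sufficiently large constant $c_2$; (e) $\frac{\overline\alpha_{t+1}}{1-\overline\alpha_{t+1}}\le\frac{\overline\alpha_t}{1-\overline\alpha_t}\le\frac{4\overline\alpha_{t+1}}{1-\overline\alpha_{t+1}}$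 for $1\le t<T$; (f) $\Big|\frac{\tau_{t,i_1}-\tau_{t,i_2}}{\tau_{t,i_3}(1-\tau_{t,i_4})}\Big|\le 8c_1\frac{\log T}{T}$ for $2\le t\le T$ and $0\le i_1,i_2,i_3,i_4\le K-1$; (g) $|\gamma_{t,i}(\tau_{t,j})|\le 2^K(\tau_{t,0}-\tau_{t,j})$ for all $0\le i,j\le K-1$; (h) $1-\tau_{t,i}\asymp 1-\tau_{t,j}$ and $\tau_{t,i}\asymp\tau_{t,j}$ for all $0\le i,j\le K-1$, $2\le t\le T$.
   Context: $a\asymp b$ means $c\,b\le a\le C\,b$ for positive numerical constants $c,C$ independent of $T$, $t$, $i$, $j$. *)

From Stdlib Require Import Reals Lra Lia Arith.
From Coquelicot Require Import Coquelicot.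
Open Scope R_scope.

Fixpoint prodR (n : nat) (f : nat -> R) : R :=
  match n with
  | O => 1
  | S m => prodR m f * f m
  end.

Definition stepL (T : nat) (c1 : R) : R := c1 * ln (INR T) / INR T.

(* beta_1 = T^{-c0};  beta_t = (c1 log T / T) * min{beta_1 (1 + c1 log T/T)^t, 1} for t >= 2
   (the value at t = 0 is never used) *)
Definition beta (T : nat) (c0 c1 : R) (t : nat) : R :=
  if (t <=? 1)%nat then Rpower (INR T) (- c0)
  else stepL T c1 * Rmin (Rpower (INR T) (- c0) * (1 + stepL T c1) ^ t) 1.

Definition alpha (T : nat) (c0 c1 : R) (t : nat) : R := 1 - beta T c0 c1 t.

Definition alphabar (T : nat) (c0 c1 : R) (t : nat) : R :=
  prodR t (fun k => alpha T c0 c1 (S k)).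

Definition tau (K T : nat) (c0 c1 : R) (t i : nat) : R :=
  let t0 := 1 - alphabar T c0 c1 t in
  let tK := 1 - alphabar T c0 c1 (t - 1) in
  t0 - INR i / INR (K - 1) * (t0 - tK).

Definition psi (K T : nat) (c0 c1 : R) (t i : nat) (x : R) : R :=
  prodR K (fun i' => if (i' =? i)%nat then 1 else x - tau K T c0 c1 t i')
  / prodR K (fun i' => if (i' =? i)%nat then 1
                       else tau K T c0 c1 t i - tau K T c0 c1 t i').

Definition gamma (K T : nat) (c0 c1 : R) (t i : nat) (x : R) : R :=
  RInt (psi K T c0 c1 t i) x (tau K T c0 c1 t 0).

(* The schedule is governed by the profile [min(beta_1 (1 + L)^t, 1)], where
   [L = c1 log T / T] and [beta_t = L * profile t] for [t >= 2].  Everything except (d) and (g)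
   follows from [beta_t <= L <= 1/8] together with the key estimate
   [beta_(t+1) <= 4 L (1 - alphabar_t)], proved by induction on [t]: once
   [1 - alphabar_t >= 1/4] it is trivial, and before that the gap [1 - alphabar_t] grows at
   least as fast as the profile.  For (d), [c1 >= 4 c0] makes the profile saturate at [1]
   after time [T/2], so [alphabar_T <= (1 - L)^(T/2) <= T^(-c1/2) <= T^(-c2)].  For (g), the nodes
   [tau_(t,i)] are equispaced; after rescaling to the nodes [0, ..., n] the numerator of a
   Lagrange basis polynomial on [[0, n]] is at most [n!] (peel off an extreme node and
   induct) and its denominator is [i! (n - i)!], so it is bounded by [C(n, i) <= 2^n]. *)

From Pilot Require Import Defs.
From Stdlib Require Import Reals Lra Lia Arith.
From Coquelicot Require Import Coquelicot.
Open Scope R_scope.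

Lemma exp_le_exp x y : x <= y -> exp x <= exp y.
Proof. intros [Hlt | ->]; [left; now apply exp_increasing | right; reflexivity]. Qed.

Lemma exp_pow_INR x n : exp x ^ n = exp (INR n * x).
Proof. rewrite <- Rpower_pow by apply exp_pos. unfold Rpower. now rewrite ln_exp. Qed.

Lemma exp_half_le x : 0 <= x <= 1 -> exp (x / 2) <= 1 + x.
Proof.
  intros Hx. pose proof (exp_ineq1_le (- (x / 2))). pose proof (exp_pos (x / 2)).
  assert (exp (x / 2) * exp (- (x / 2)) = 1) by (rewrite <- exp_plus, Rplus_opp_r; apply exp_0).
  nra.
Qed.

Lemma ln_ge_1 x : 3 <= x -> 1 <= ln x.
Proof.
  intros Hx. rewrite <- (ln_exp 1). apply ln_le; [apply exp_pos|]. pose proof exp_le_3. lra.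
Qed.

Lemma Rdiv_le_cross a b c d : 0 < b -> 0 < d -> a * d <= c * b -> a / b <= c / d.
Proof.
  intros Hb Hd H. apply Rmult_le_reg_r with (b * d); [nra|].
  replace (a / b * (b * d)) with (a * d) by (field; lra).
  replace (c / d * (b * d)) with (c * b) by (field; lra). exact H.
Qed.

Lemma Rmin_mult_1_le q x : 1 <= q -> 0 <= x -> Rmin (q * x) 1 <= q * Rmin x 1.
Proof. intros Hq Hx. unfold Rmin. destruct (Rle_dec (q * x) 1), (Rle_dec x 1); nra. Qed.

Lemma prodR_ext n f g : (forall k, (k < n)%nat -> f k = g k) -> prodR n f = prodR n g.
Proof.
  induction n as [|n IH]; intros Hfg; simpl; [reflexivity|].
  rewrite IH, Hfg; [reflexivity | lia | intros; apply Hfg; lia].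
Qed.

Lemma prodR_add m n f : prodR (m + n) f = prodR m f * prodR n (fun k => f (m + k)%nat).
Proof.
  induction n as [|n IH]; simpl.
  - rewrite Nat.add_0_r. ring.
  - rewrite Nat.add_succ_r. simpl. rewrite IH. ring.
Qed.

Lemma prodR_mult n f g : prodR n (fun k => f k * g k) = prodR n f * prodR n g.
Proof. induction n as [|n IH]; simpl; [ring|]. rewrite IH. ring. Qed.

Lemma prodR_div n f g : prodR n (fun k => f k / g k) = prodR n f / prodR n g.
Proof.
  unfold Rdiv. rewrite prodR_mult. f_equal.
  induction n as [|n IH]; simpl; [now rewrite Rinv_1|]. now rewrite IH, Rinv_mult.
Qed.

Lemma prodR_abs n f : Rabs (prodR n f) = prodR n (fun k => Rabs (f k)).
Proof. induction n as [|n IH]; simpl; [apply Rabs_R1|]. now rewrite Rabs_mult, IH. Qed.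

Lemma prodR_nonneg n f : (forall k, (k < n)%nat -> 0 <= f k) -> 0 <= prodR n f.
Proof.
  induction n as [|n IH]; intros Hf; simpl; [lra|].
  apply Rmult_le_pos; [apply IH; intros|]; apply Hf; lia.
Qed.

Lemma prodR_rev n f : prodR n f = prodR n (fun k => f (n - 1 - k)%nat).
Proof.
  induction n as [|n IH]; [reflexivity|].
  change (S n) with (1 + n)%nat at 2. rewrite prodR_add. simpl prodR at 1 2.
  rewrite IH, !Nat.sub_0_r, Rmult_1_l, Rmult_comm. f_equal.
  apply prodR_ext. intros k Hk. f_equal. lia.
Qed.

Lemma prodR_fact n : prodR n (fun k => INR (S k)) = INR (fact n).
Proof.
  induction n as [|n IH]; [reflexivity|].
  change (prodR n (fun k => INR (S k)) * INR (S n) = INR (fact (S n))).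
  rewrite IH, fact_simpl, mult_INR. ring.
Qed.

Lemma prod_dist_to_nodes_le n (e : nat -> bool) s :
  0 <= s <= INR n ->
  prodR (S n) (fun k => if e k then 1 else Rabs (INR k - s)) <= INR (fact n).
Proof.
  revert e s; induction n as [|n IH]; intros e s Hs.
  - simpl in Hs. replace s with 0 by lra. simpl.
    destruct (e 0%nat); rewrite ?Rminus_0_r, ?Rabs_R0; lra.
  - set (F := fun k => if e k then 1 else Rabs (INR k - s)).
    assert (HF : forall k, (k <= S n)%nat -> 0 <= F k <= INR (S n)).
    { intros k Hk. apply le_INR in Hk. pose proof (pos_INR k). pose proof (pos_INR n).
      rewrite S_INR in *. unfold F. destruct (e k); [lra|].
      split; [apply Rabs_pos | apply Rabs_le; lra]. }
    assert (HFprod : forall m, (m <= S (S n))%nat -> 0 <= prodR m F).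
    { intros m Hm. apply prodR_nonneg. intros k Hk. apply HF. lia. }
    rewrite fact_simpl, mult_INR.
    destruct (Rle_or_lt s (INR n)) as [Hsn | Hsn].
    + change (prodR (S (S n)) F) with (prodR (S n) F * F (S n)).
      rewrite Rmult_comm.
      apply Rmult_le_compat; [apply HF; lia | apply HFprod; lia | apply HF; lia | apply IH; lra].
    + destruct n as [|n].
      * (* [n = 0] and [0 < s < 1]: neither node can be peeled, but both factors are at most 1. *)
        destruct (HF 0%nat), (HF 1%nat); try lia.
        change (1 * F 0%nat * F 1%nat <= 1 * 1). simpl INR in *. nra.
      * change (S (S (S n))) with (1 + S (S n))%nat. rewrite prodR_add.
        rewrite (prodR_ext (S (S n)) _ (fun k => if e (S k) then 1 else Rabs (INR k - (s - 1)))).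
        2:{ intros k _. unfold F. simpl plus. rewrite S_INR.
            now replace (INR k + 1 - s) with (INR k - (s - 1)) by ring. }
        change (prodR 1 F) with (1 * F 0%nat). rewrite Rmult_1_l.
        rewrite S_INR in Hsn.
        apply Rmult_le_compat; [apply HF; lia | apply prodR_nonneg | apply HF; lia | apply IH].
        -- intros k _. destruct (e (S k)); [lra | apply Rabs_pos].
        -- pose proof (pos_INR n). rewrite !S_INR in *. lra.
Qed.

Lemma prod_dist_between_nodes n i : (i <= n)%nat ->
  prodR (S n) (fun k => if (k =? i)%nat then 1 else Rabs (INR k - INR i))
  = INR (fact i) * INR (fact (n - i)).
Proof.
  intros Hi. replace (S n) with (S i + (n - i))%nat by lia. rewrite prodR_add.
  f_equal; rewrite <- prodR_fact.
  - change (prodR (S i) ?g) with (prodR i g * g i). cbv beta.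
    rewrite Nat.eqb_refl, Rmult_1_r, prodR_rev. apply prodR_ext. intros k Hk.
    destruct (Nat.eqb_spec (i - 1 - k) i); [lia|].
    rewrite Rabs_left1, !minus_INR, (S_INR k) by (try apply Rle_minus, le_INR; lia).
    simpl INR. ring.
  - apply prodR_ext. intros k _.
    destruct (Nat.eqb_spec (S i + k) i); [lia|].
    rewrite Rabs_right, plus_INR, !S_INR; [ring|].
    rewrite plus_INR, S_INR. pose proof (pos_INR k). lra.
Qed.

Lemma sum_f_R0_term_le f N i :
  (forall k, (k <= N)%nat -> 0 <= f k) -> (i <= N)%nat -> f i <= sum_f_R0 f N.
Proof.
  revert i; induction N as [|N IH]; intros i Hf Hi; simpl.
  - replace i with 0%nat by lia. lra.
  - assert (IH' : forall j, (j <= N)%nat -> f j <= sum_f_R0 f N)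
      by (intros j Hj; apply IH; [intros; apply Hf; lia | exact Hj]).
    pose proof (Hf (S N) (le_n _)). pose proof (Hf 0%nat ltac:(lia)).
    pose proof (IH' 0%nat ltac:(lia)).
    destruct (Nat.eq_dec i (S N)) as [->|HiN]; [lra|].
    pose proof (IH' i ltac:(lia)). lra.
Qed.

Lemma binomial_C_le_pow2 n i : (i <= n)%nat -> Binomial.C n i <= 2 ^ n.
Proof.
  intros Hi. replace 2 with (1 + 1) by ring. rewrite binomial.
  assert (Hterm : forall k, Binomial.C n k * 1 ^ k * 1 ^ (n - k) = Binomial.C n k)
    by (intros k; rewrite !pow1; ring).
  rewrite <- (Hterm i).
  apply (sum_f_R0_term_le (fun k => Binomial.C n k * 1 ^ k * 1 ^ (n - k))); [|exact Hi].
  intros k _. rewrite Hterm. unfold Binomial.C.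
  apply Rdiv_le_0_compat; [apply pos_INR|].
  apply Rmult_lt_0_compat; apply lt_0_INR, lt_O_fact.
Qed.

Lemma lagrange_basis_equispaced_le n i t0 h x :
  0 < h -> (i <= n)%nat -> t0 - INR n * h <= x <= t0 ->
  Rabs (prodR (S n) (fun k => if (k =? i)%nat then 1 else x - (t0 - INR k * h))
        / prodR (S n) (fun k => if (k =? i)%nat then 1 else (t0 - INR i * h) - (t0 - INR k * h)))
  <= 2 ^ n.
Proof.
  intros Hh Hi Hx. set (s := (t0 - x) / h).
  assert (Hs : 0 <= s <= INR n).
  { unfold s. split; [apply Rdiv_le_0_compat; lra | apply Rle_div_l; lra]. }
  rewrite <- prodR_div, prodR_abs.
  rewrite (prodR_ext _ _ (fun k => (if (k =? i)%nat then 1 else Rabs (INR k - s))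
                                   / (if (k =? i)%nat then 1 else Rabs (INR k - INR i)))).
  2:{ intros k _. destruct (Nat.eqb_spec k i) as [_|Hki]; [rewrite Rdiv_1_r; apply Rabs_R1|].
      assert (INR k <> INR i) by (apply not_INR; exact Hki).
      rewrite <- Rabs_div by lra. f_equal. unfold s. field. repeat split; try lra.
      replace (t0 - INR i * h - (t0 - INR k * h)) with (h * (INR k - INR i)) by ring.
      apply Rmult_integral_contrapositive_currified; lra. }
  rewrite prodR_div, prod_dist_between_nodes by exact Hi.
  apply Rle_trans with (Binomial.C n i); [|now apply binomial_C_le_pow2].
  unfold Binomial.C. apply Rmult_le_compat_r; [|now apply prod_dist_to_nodes_le].
  left. apply Rinv_0_lt_compat, Rmult_lt_0_compat; apply lt_0_INR, lt_O_fact.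
Qed.

Lemma prodR_continuous n (F : nat -> R -> R) z :
  (forall k, continuous (F k) z) -> continuous (fun x => prodR n (fun k => F k x)) z.
Proof.
  intros HF. induction n as [|n IH]; simpl.
  - apply continuous_const.
  - exact (continuous_mult (fun x => prodR n (fun k => F k x)) (F n) z IH (HF n)).
Qed.

Lemma psi_continuous K T c0 c1 t i z : continuous (psi K T c0 c1 t i) z.
Proof.
  apply (continuous_mult _ (fun _ => / _)); [|apply continuous_const].
  apply (prodR_continuous K (fun k x => if (k =? i)%nat then 1 else x - tau K T c0 c1 t k)).
  intros k. destruct (k =? i)%nat; [apply continuous_const|].
  apply (continuous_minus (fun x => x) (fun _ => tau K T c0 c1 t k));
    [apply continuous_id | apply continuous_const].
Qed.

Lemma index_ratio_bounds K i : (2 <= K)%nat -> (i <= K - 1)%nat -> 0 <= INR i / INR (K - 1) <= 1.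
Proof.
  intros HK Hi. assert (0 < INR (K - 1)) by (apply lt_0_INR; lia).
  split; [apply Rdiv_le_0_compat; [apply pos_INR | lra]|].
  apply Rle_div_l; [lra|]. rewrite Rmult_1_l. now apply le_INR.
Qed.

Lemma alphabar_succ T c0 c1 t :
  alphabar T c0 c1 (S t) = alphabar T c0 c1 t * alpha T c0 c1 (S t).
Proof. reflexivity. Qed.

Lemma beta_succ_succ T c0 c1 t :
  beta T c0 c1 (S (S t))
  = stepL T c1 * Rmin (Rpower (INR T) (- c0) * (1 + stepL T c1) ^ S (S t)) 1.
Proof. reflexivity. Qed.

Section Schedule.

Variables (T : nat) (c0 c1 : R).

Local Notation L := (stepL T c1).
Local Notation beta1 := (Rpower (INR T) (- c0)).
Local Notation profile t := (Rmin (beta1 * (1 + L) ^ t) 1).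
Local Notation be := (beta T c0 c1).
Local Notation al := (alpha T c0 c1).
Local Notation ab := (alphabar T c0 c1).

Hypothesis L_pos_small : 0 < L <= 1/8.
Hypothesis beta1_le_L : beta1 <= L.

Lemma beta1_pos : 0 < beta1.
Proof. apply exp_pos. Qed.

Lemma profile_pos_le1 t : 0 < profile t <= 1.
Proof.
  pose proof beta1_pos. split; [|apply Rmin_r].
  apply Rmin_pos; [|lra]. apply Rmult_lt_0_compat; [lra | apply pow_lt; lra].
Qed.

Lemma beta_pos_le t : 0 < be t <= L.
Proof.
  pose proof beta1_pos.
  destruct t as [|[|t]]; [change (be 0) with beta1; lra | change (be 1) with beta1; lra |].
  rewrite beta_succ_succ. pose proof (profile_pos_le1 (S (S t))). split; nra.
Qed.

Lemma alpha_bounds t : 1 - L <= al t < 1.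
Proof. pose proof (beta_pos_le t). unfold alpha. lra. Qed.

Lemma alphabar_pos_le1 t : 0 < ab t <= 1.
Proof.
  induction t as [|t IH]; [change (ab 0) with 1; lra|].
  rewrite alphabar_succ. pose proof (alpha_bounds (S t)). split; nra.
Qed.

Lemma profile_le_gap t : (1 <= t)%nat -> profile (S t) <= 4 * (1 - ab t).
Proof.
  intros Ht. induction t as [|t IH]; [lia|]. destruct t as [|t].
  - change (ab 1) with (1 * (1 - beta1)).
    assert ((1 + L) ^ 2 <= 4) by (simpl; nra).
    apply Rle_trans with (beta1 * (1 + L) ^ 2); [apply Rmin_l|].
    pose proof beta1_pos. nra.
  - specialize (IH ltac:(lia)).
    rewrite alphabar_succ. unfold alpha. rewrite beta_succ_succ.
    pose proof (alphabar_pos_le1 (S t)). pose proof (profile_pos_le1 (S (S t))).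
    pose proof (profile_pos_le1 (S (S (S t)))). pose proof beta1_pos.
    assert (Hu01 : 0 <= 1 - ab (S t) < 1) by lra.
    set (u := 1 - ab (S t)) in *. set (m := profile (S (S t))) in *.
    replace (1 - ab (S t) * (1 - L * m)) with (u + (1 - u) * L * m) by (unfold u; ring).
    destruct (Rle_or_lt (1/4) u) as [Hu | Hu].
    + assert (0 <= (1 - u) * L * m) by (apply Rmult_le_pos; [apply Rmult_le_pos|]; lra). lra.
    + assert (Hgrow : profile (S (S (S t))) <= (1 + L) * m).
      { replace (beta1 * (1 + L) ^ S (S (S t))) with ((1 + L) * (beta1 * (1 + L) ^ S (S t)))
          by (simpl; ring).
        apply Rmin_mult_1_le; [lra|]. apply Rmult_le_pos; [lra | apply pow_le; lra]. }
      assert (0 <= (3 - 4 * u) * (L * m)) by (apply Rmult_le_pos; nra).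
      nra.
Qed.

Lemma alphabar_lt1 t : (1 <= t)%nat -> ab t < 1.
Proof.
  intros Ht. destruct t as [|t]; [lia|]. rewrite alphabar_succ.
  pose proof (alphabar_pos_le1 t). pose proof (alpha_bounds (S t)). nra.
Qed.

Lemma beta_succ_le_gap t : (1 <= t)%nat -> be (S t) <= 4 * L * (1 - ab t).
Proof.
  intros Ht. destruct t as [|t]; [lia|]. rewrite beta_succ_succ.
  pose proof (profile_le_gap (S t) Ht). nra.
Qed.

Lemma beta_ratio_bounds t : (2 <= t)%nat ->
  1/2 * ((1 - al t) / (1 - ab t)) <= 1/2 * ((1 - al t) / (al t - ab t)) /\
  1/2 * ((1 - al t) / (al t - ab t)) <= (1 - al t) / (1 - ab (t - 1)) /\
  (1 - al t) / (1 - ab (t - 1)) <= 4 * L.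
Proof.
  intros Ht. destruct t as [|t]; [lia|]. rewrite Nat.sub_succ, Nat.sub_0_r, alphabar_succ.
  pose proof (alphabar_pos_le1 t). pose proof (alphabar_lt1 t ltac:(lia)).
  pose proof (beta_pos_le (S t)). pose proof (beta_succ_le_gap t ltac:(lia)).
  unfold alpha. set (a := ab t) in *. set (b := be (S t)) in *.
  replace (1 - (1 - b)) with b by ring.
  replace (1 - b - a * (1 - b)) with ((1 - a) * (1 - b)) by ring.
  repeat split.
  - apply Rmult_le_compat_l; [lra|]. apply Rdiv_le_cross; nra.
  - replace (1 / 2 * (b / ((1 - a) * (1 - b)))) with (b / (2 * (1 - a) * (1 - b))) by (field; lra).
    apply Rdiv_le_cross; [nra | lra |]. rewrite Rmult_assoc. apply Rmult_le_compat_l; nra.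
  - apply Rle_div_l; lra.
Qed.

Lemma gap_ratio_bounds t : (2 <= t)%nat ->
  1 <= (1 - ab t) / (1 - ab (t - 1)) <= 1 + 4 * L.
Proof.
  intros Ht. destruct t as [|t]; [lia|]. rewrite Nat.sub_succ, Nat.sub_0_r, alphabar_succ.
  pose proof (alphabar_pos_le1 t). pose proof (alphabar_lt1 t ltac:(lia)).
  pose proof (beta_pos_le (S t)). pose proof (beta_succ_le_gap t ltac:(lia)).
  unfold alpha. set (a := ab t) in *. set (b := be (S t)) in *.
  split; [apply Rle_div_r | apply Rle_div_l]; nra.
Qed.

Lemma alphabar_odds_bounds t : (1 <= t)%nat ->
  ab (S t) / (1 - ab (S t)) <= ab t / (1 - ab t) <= 4 * (ab (S t) / (1 - ab (S t))).
Proof.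
  intros Ht. rewrite alphabar_succ.
  pose proof (alphabar_pos_le1 t). pose proof (alphabar_lt1 t Ht).
  pose proof (beta_pos_le (S t)). pose proof (beta_succ_le_gap t Ht).
  unfold alpha. set (a := ab t) in *. set (b := be (S t)) in *.
  split; [|rewrite Rmult_div_assoc]; apply Rdiv_le_cross; try nra.
  replace (4 * (a * (1 - b)) * (1 - a)) with (a * (4 * (1 - b) * (1 - a))) by ring.
  apply Rmult_le_compat_l; nra.
Qed.

Lemma alphabar_le_pow k m q : 0 <= q ->
  (forall t, (k < t <= k + m)%nat -> al t <= q) -> ab (k + m) <= q ^ m.
Proof.
  intros Hq Hal. induction m as [|m IH].
  - rewrite Nat.add_0_r. apply alphabar_pos_le1.
  - rewrite Nat.add_succ_r, alphabar_succ. simpl pow.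
    pose proof (alphabar_pos_le1 (k + m)). pose proof (alpha_bounds (S (k + m))).
    assert (al (S (k + m)) <= q) by (apply Hal; lia).
    assert (ab (k + m) <= q ^ m) by (apply IH; intros; apply Hal; lia).
    rewrite Rmult_comm. apply Rmult_le_compat; lra.
Qed.

Lemma alpha_le_late t : 3 <= INR T -> 4 * c0 <= c1 -> (T < 2 * t)%nat -> al t <= 1 - L.
Proof.
  intros HT Hc Ht. pose proof (ln_ge_1 _ HT).
  assert (HT3 : (3 <= T)%nat) by (apply INR_le; simpl; lra).
  destruct t as [|[|t]]; [lia | lia |].
  unfold alpha. rewrite beta_succ_succ, Rmin_right; [lra|].
  set (n := S (S t)) in *.
  assert (Hn : INR T <= 2 * INR n).
  { apply lt_INR in Ht. rewrite mult_INR in Ht. replace (INR 2) with 2 in Ht by (simpl; lra). lra. }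
  assert (HLT : L * INR T = c1 * ln (INR T)) by (unfold stepL; field; lra).
  apply Rle_trans with (exp (- c0 * ln (INR T)) * exp (L / 2) ^ n).
  - rewrite exp_pow_INR, <- exp_plus, <- exp_0. apply exp_le_exp. nra.
  - apply Rmult_le_compat_l; [left; apply exp_pos|].
    apply pow_incr. split; [left; apply exp_pos | apply exp_half_le; lra].
Qed.

Lemma alphabar_final_le c2 : 3 <= INR T -> 4 * c0 <= c1 -> 2 * c2 <= c1 ->
  ab T <= Rpower (INR T) (- c2).
Proof.
  intros HT Hc0 Hc2. pose proof (ln_ge_1 _ HT).
  set (k := (T / 2)%nat). set (m := (T - k)%nat).
  assert (Hk : (2 * k <= T < 2 * S k)%nat).
  { pose proof (Nat.div_mod_eq T 2). pose proof (Nat.mod_upper_bound T 2). unfold k. lia. }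
  assert (Htail : ab (k + m) <= (1 - L) ^ m).
  { apply alphabar_le_pow; [lra|]. intros t Ht. apply alpha_le_late; [exact HT | exact Hc0 | lia]. }
  replace (k + m)%nat with T in Htail by lia.
  eapply Rle_trans; [exact Htail|].
  assert (Hm : INR T <= 2 * INR m).
  { assert (Hm : (T <= 2 * m)%nat) by lia.
    apply le_INR in Hm. rewrite mult_INR in Hm. replace (INR 2) with 2 in Hm by (simpl; lra). lra. }
  assert (HLT : L * INR T = c1 * ln (INR T)) by (unfold stepL; field; lra).
  apply Rle_trans with (exp (- L) ^ m).
  { apply pow_incr. split; [lra|]. pose proof (exp_ineq1_le (- L)). lra. }
  rewrite exp_pow_INR. unfold Rpower. apply exp_le_exp. nra.
Qed.

Variable K : nat.
Hypothesis K_ge2 : (2 <= K)%nat.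

Local Notation tau := (tau K T c0 c1).

Lemma tau_between t i : (1 <= t)%nat -> (i <= K - 1)%nat ->
  1 - ab (t - 1) <= tau t i <= 1 - ab t.
Proof.
  intros Ht Hi. destruct t as [|t]; [lia|]. rewrite Nat.sub_succ, Nat.sub_0_r.
  unfold Defs.tau. rewrite Nat.sub_succ, Nat.sub_0_r, alphabar_succ.
  pose proof (index_ratio_bounds K i K_ge2 Hi).
  pose proof (alphabar_pos_le1 t). pose proof (alpha_bounds (S t)).
  assert (Hd : 0 <= ab t * (1 - al (S t))) by nra.
  replace (1 - ab t * al (S t)) with (1 - ab t + ab t * (1 - al (S t))) by ring.
  set (r := INR i / INR (K - 1)) in *. set (d := ab t * (1 - al (S t))) in *. split; nra.
Qed.

Lemma tau_spread_le t : (2 <= t)%nat -> (ab (t - 1) - ab t) / ((1 - ab (t - 1)) * ab t) <= 8 * L.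
Proof.
  intros Ht. destruct t as [|t]; [lia|]. rewrite Nat.sub_succ, Nat.sub_0_r, alphabar_succ.
  pose proof (alphabar_pos_le1 t). pose proof (alphabar_lt1 t ltac:(lia)).
  pose proof (beta_pos_le (S t)). pose proof (beta_succ_le_gap t ltac:(lia)).
  unfold alpha. set (a := ab t) in *. set (b := be (S t)) in *.
  apply Rle_div_l; [apply Rmult_lt_0_compat; nra|].
  replace (a - a * (1 - b)) with (a * b) by ring.
  replace (8 * L * ((1 - a) * (a * (1 - b)))) with (a * (8 * (L * (1 - a)) * (1 - b))) by ring.
  apply Rmult_le_compat_l; [lra|]. assert (0 <= L * (1 - a)) by nra. nra.
Qed.

Lemma tau_diff_ratio_le t i1 i2 i3 i4 : (2 <= t)%nat ->
  (i1 <= K - 1)%nat -> (i2 <= K - 1)%nat -> (i3 <= K - 1)%nat -> (i4 <= K - 1)%nat ->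
  Rabs ((tau t i1 - tau t i2) / (tau t i3 * (1 - tau t i4))) <= 8 * L.
Proof.
  intros Ht H1 H2 H3 H4.
  pose proof (tau_between t i1 ltac:(lia) H1). pose proof (tau_between t i2 ltac:(lia) H2).
  pose proof (tau_between t i3 ltac:(lia) H3). pose proof (tau_between t i4 ltac:(lia) H4).
  pose proof (alphabar_pos_le1 t). pose proof (alphabar_lt1 (t - 1) ltac:(lia)).
  assert (Hden : (1 - ab (t - 1)) * ab t <= tau t i3 * (1 - tau t i4))
    by (apply Rmult_le_compat; lra).
  assert (Hnum : Rabs (tau t i1 - tau t i2) <= ab (t - 1) - ab t) by (apply Rabs_le; lra).
  assert (Hden_pos : 0 < (1 - ab (t - 1)) * ab t) by (apply Rmult_lt_0_compat; lra).
  rewrite Rabs_div, (Rabs_right (_ * _)) by lra.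
  eapply Rle_trans; [|exact (tau_spread_le t Ht)].
  apply Rdiv_le_cross; [lra | exact Hden_pos |].
  pose proof (Rabs_pos (tau t i1 - tau t i2)). nra.
Qed.

Lemma tau_comparable t i j : (2 <= t)%nat -> (i <= K - 1)%nat -> (j <= K - 1)%nat ->
  1/2 * (1 - tau t j) <= 1 - tau t i /\ 1 - tau t i <= 2 * (1 - tau t j) /\
  1/2 * tau t j <= tau t i /\ tau t i <= 2 * tau t j.
Proof.
  intros Ht Hi Hj.
  pose proof (tau_between t i ltac:(lia) Hi). pose proof (tau_between t j ltac:(lia) Hj).
  assert (Hratio : ab (t - 1) <= 2 * ab t /\ 1 - ab t <= 2 * (1 - ab (t - 1))).
  { destruct t as [|t]; [lia|]. rewrite Nat.sub_succ, Nat.sub_0_r, alphabar_succ.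
    pose proof (alphabar_pos_le1 t). pose proof (alphabar_lt1 t ltac:(lia)).
    pose proof (beta_pos_le (S t)). pose proof (beta_succ_le_gap t ltac:(lia)).
    unfold alpha. split; nra. }
  pose proof (alphabar_lt1 (t - 1) ltac:(lia)). pose proof (alphabar_pos_le1 t).
  repeat split; nra.
Qed.

Lemma gamma_le t i j : (2 <= t)%nat -> (i <= K - 1)%nat -> (j <= K - 1)%nat ->
  Rabs (gamma K T c0 c1 t i (tau t j)) <= 2 ^ K * (tau t 0 - tau t j).
Proof.
  intros Ht Hi Hj. set (n := (K - 1)%nat) in *.
  assert (Hn : 0 < INR n) by (apply lt_0_INR; unfold n; lia).
  set (t0 := 1 - ab t). set (h := (ab (t - 1) - ab t) / INR n).
  assert (Hh : 0 < h).
  { unfold h. apply Rdiv_lt_0_compat; [|exact Hn].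
    destruct t as [|t]; [lia|]. rewrite Nat.sub_succ, Nat.sub_0_r, alphabar_succ.
    pose proof (alphabar_pos_le1 t). pose proof (alpha_bounds (S t)). nra. }
  assert (Htau : forall k, tau t k = t0 - INR k * h)
    by (intros k; unfold Defs.tau, t0, h; fold n; field; lra).
  assert (Hjn : INR j <= INR n) by (apply le_INR; exact Hj).
  pose proof (pos_INR j).
  unfold gamma. rewrite !Htau, Rmult_0_l, Rminus_0_r.
  apply Rle_trans with ((t0 - (t0 - INR j * h)) * 2 ^ n).
  - apply abs_RInt_le_const; [nra | |].
    { apply (@ex_RInt_continuous R_CompleteNormedModule). intros. apply psi_continuous. }
    intros x Hx. unfold psi.
    rewrite (prodR_ext K _ (fun k => if (k =? i)%nat then 1 else x - (t0 - INR k * h))),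
      (prodR_ext K (fun k => if (k =? i)%nat then 1 else tau t i - tau t k)
                   (fun k => if (k =? i)%nat then 1 else (t0 - INR i * h) - (t0 - INR k * h)))
      by (intros k _; now rewrite ?Htau).
    replace K with (S n) by (unfold n; lia).
    apply lagrange_basis_equispaced_le; [exact Hh | exact Hi | nra].
  - rewrite Rmult_comm. apply Rmult_le_compat_r; [nra|]. apply Rle_pow; [lra | unfold n; lia].
Qed.

End Schedule.

Lemma stepL_pos T c1 : 0 < c1 -> 3 <= INR T -> 0 < stepL T c1.
Proof. intros Hc HT. pose proof (ln_ge_1 _ HT). unfold stepL. apply Rdiv_lt_0_compat; nra. Qed.

Lemma Rpower_opp_le_stepL T c0 c1 : 1 <= c0 -> 1 <= c1 -> 3 <= INR T ->
  Rpower (INR T) (- c0) <= stepL T c1.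
Proof.
  intros Hc0 Hc1 HT. pose proof (ln_ge_1 _ HT).
  apply Rle_trans with (exp (- ln (INR T))); [apply exp_le_exp; nra|].
  rewrite exp_Ropp, exp_ln by lra. unfold stepL, Rdiv.
  rewrite <- (Rmult_1_l (/ INR T)) at 1.
  apply Rmult_le_compat_r; [left; apply Rinv_0_lt_compat|]; nra.
Qed.

Lemma stepL_eventually_small c1 : 0 < c1 ->
  exists T0 : nat, forall T, (T0 <= T)%nat -> 3 <= INR T /\ stepL T c1 <= 1/8.
Proof.
  intros Hc. destruct (INR_unbounded (256 * c1 * c1 + 3)) as [T0 HT0]. exists T0.
  intros T HT. apply le_INR in HT. set (x := INR T) in *.
  assert (Hx : 256 * c1 * c1 + 3 < x) by lra. split; [nra|].
  assert (Hs : 0 < sqrt x) by (apply sqrt_lt_R0; nra).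
  assert (Hss : sqrt x * sqrt x = x) by (apply sqrt_sqrt; nra).
  (* [ln x = 2 ln (sqrt x) <= 2 (sqrt x - 1)], so [c1 ln x / x <= 2 c1 / sqrt x <= 1/8]. *)
  assert (Hln : ln x <= 2 * sqrt x).
  { rewrite <- Hss at 1. rewrite ln_mult by exact Hs.
    pose proof (exp_ineq1_le (ln (sqrt x))). rewrite exp_ln in * by exact Hs. lra. }
  assert (H16 : 16 * c1 <= sqrt x).
  { rewrite <- (sqrt_square (16 * c1)) by lra. apply sqrt_le_1_alt. nra. }
  unfold stepL. fold x. apply Rle_div_l; [nra|].
  assert (c1 * ln x <= c1 * (2 * sqrt x)) by (apply Rmult_le_compat_l; lra). nra.
Qed.

Theorem lemma1 :
  forall (K : nat), (2 <= K)%nat ->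
  forall c2 : R,
  exists C0 : R, forall c0 : R, 0 < c0 -> C0 <= c0 ->
  exists C1 : R, forall c1 : R, 0 < c1 -> C1 <= c1 ->
  exists (T0 : nat) (cc CC : R), 0 < cc /\ 0 < CC /\
  forall T : nat, (T0 <= T)%nat ->
    let L := c1 * ln (INR T) / INR T in
    let al := alpha T c0 c1 in
    let ab := alphabar T c0 c1 in
    let tau := tau K T c0 c1 in
    (* (a) *)
    (forall t, (1 <= t <= T)%nat -> al t >= 1 - L /\ 1 - L >= 1/2) /\
    (* (b) *)
    (forall t, (2 <= t <= T)%nat ->
       1/2 * ((1 - al t) / (1 - ab t)) <= 1/2 * ((1 - al t) / (al t - ab t)) /\
       1/2 * ((1 - al t) / (al t - ab t)) <= (1 - al t) / (1 - ab (t - 1)%nat) /\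
       (1 - al t) / (1 - ab (t - 1)%nat) <= 4 * L) /\
    (* (c) *)
    (forall t, (2 <= t <= T)%nat ->
       1 <= (1 - ab t) / (1 - ab (t - 1)%nat) /\
       (1 - ab t) / (1 - ab (t - 1)%nat) <= 1 + 4 * L) /\
    (* (d) *)
    ab T <= Rpower (INR T) (- c2) /\
    (* (e) *)
    (forall t, (1 <= t < T)%nat ->
       ab (S t) / (1 - ab (S t)) <= ab t / (1 - ab t) /\
       ab t / (1 - ab t) <= 4 * (ab (S t) / (1 - ab (S t)))) /\
    (* (f) *)
    (forall t i1 i2 i3 i4, (2 <= t <= T)%nat ->
       (i1 <= K - 1)%nat -> (i2 <= K - 1)%nat ->
       (i3 <= K - 1)%nat -> (i4 <= K - 1)%nat ->
       Rabs ((tau t i1 - tau t i2) / (tau t i3 * (1 - tau t i4))) <= 8 * L) /\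
    (* (g) *)
    (forall t i j, (2 <= t <= T)%nat -> (i <= K - 1)%nat -> (j <= K - 1)%nat ->
       Rabs (gamma K T c0 c1 t i (tau t j)) <= 2 ^ K * (tau t 0%nat - tau t j)) /\
    (* (h) *)
    (forall t i j, (2 <= t <= T)%nat -> (i <= K - 1)%nat -> (j <= K - 1)%nat ->
       cc * (1 - tau t j) <= 1 - tau t i /\ 1 - tau t i <= CC * (1 - tau t j) /\
       cc * tau t j <= tau t i /\ tau t i <= CC * tau t j).
Proof.
  intros K HK c2. exists 1. intros c0 _ Hc0.
  exists (4 * c0 + 2 * Rabs c2 + 1). intros c1 _ Hc1.
  pose proof (Rle_abs c2). pose proof (Rabs_pos c2).
  destruct (stepL_eventually_small c1 ltac:(lra)) as [T0 HT0].
  exists T0, (1/2), 2. split; [lra|]. split; [lra|].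
  intros T HT. destruct (HT0 T HT) as [HT3 HLsmall]. cbv zeta. fold (stepL T c1).
  assert (HL : 0 < stepL T c1 <= 1/8) by (split; [apply stepL_pos; lra | exact HLsmall]).
  assert (Hb : Rpower (INR T) (- c0) <= stepL T c1) by (apply Rpower_opp_le_stepL; lra).
  split; [|split; [|split; [|split; [|split; [|split; [|split]]]]]].
  - intros t _. pose proof (alpha_bounds T c0 c1 HL Hb t). lra.
  - intros t Ht. apply (beta_ratio_bounds T c0 c1 HL Hb). lia.
  - intros t Ht. apply (gap_ratio_bounds T c0 c1 HL Hb). lia.
  - apply (alphabar_final_le T c0 c1 HL Hb); lra.
  - intros t Ht. apply (alphabar_odds_bounds T c0 c1 HL Hb). lia.
  - intros t i1 i2 i3 i4 Ht. apply (tau_diff_ratio_le T c0 c1 HL Hb K HK). lia.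
  - intros t i j Ht. apply (gamma_le T c0 c1 HL Hb K HK). lia.
  - intros t i j Ht. apply (tau_comparable T c0 c1 HL Hb K HK). lia.
Qed.
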